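(* Assume $1-4M_0=0$. For $x\in\Omega_0$ put $A(x):=\partial_x u_0(x)$ and $B(x):=-\tfrac12\partial_x u_0(x)-\tfrac14+2\rho_0(x)$, and for $t\ge0$ $$D(t,x):=8\rho_0(x)-\big(2A(x)+4B(x)\big)e^{-t/2}-2B(x)\,t\,e^{-t/2}$$ (this is the expression of $\partial_x\eta(t,x)$ for a classical solution of the Lagrangian system, as long as it exists). Then there exist $t>0$ and $x\in\Omega_0$ with $D(t,x)\le0$ if and only if there exists $x\in\Omega_0$ such that $$\partial_x u_0(x)<\min\Big\{0,\,4\rho_0(x)-\tfrac12\Big\}$$ and $$\ln\left(\frac{8\rho_0(x)}{8\rho_0(x)-2\partial_x u_0(x)-1}\right)\le\frac{2\partial_x u_0(x)}{8\rho_0(x)-2\partial_x u_0(x)-1}.$$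
   Context: $\Omega_0=(a_0,b_0)$ is a bounded open interval, $\rho_0\in H^2(\Omega_0)$ with $\rho_0>0$ on $\Omega_0$, $u_0\in H^3(\Omega_0)$ (both continuous up to the boundary), and $M_0:=\int_{\Omega_0}\rho_0(x)\,dx>0$. Note $D(0,x)=1$ for all $x$. *)

From Stdlib Require Import Reals Lra.
Open Scope R_scope.

Definition Acoef (du0 : R -> R) (x : R) : R := du0 x.
Definition Bcoef (rho0 du0 : R -> R) (x : R) : R := - (1/2) * du0 x - 1/4 + 2 * rho0 x.

Definition Dfun (rho0 du0 : R -> R) (t x : R) : R :=
  8 * rho0 x - (2 * Acoef du0 x + 4 * Bcoef rho0 du0 x) * exp (- t / 2)
  - 2 * Bcoef rho0 du0 x * t * exp (- t / 2).

(* Since the total mass is 1/4, the constant 2A + 4B equals 8 rho0 - 1, so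
   D(t,x) = exp(-t/2) f(t/2) with f(s) = c e^s - (c - 1) - k s, c = 8 rho0(x),
   k = 8 rho0(x) - 2 u0'(x) - 1.  By e^s >= 1 + s, f > 0 on s >= 0 when k <= c;
   when c < k the convex function f is minimal at s = ln(k/c) > 0, with value
   k - (c - 1) - k ln(k/c), whose sign is the logarithmic condition. *)

From Stdlib Require Import Reals Lra.
Open Scope R_scope.

Lemma ln_div x y : 0 < x -> 0 < y -> ln (x / y) = ln x - ln y.
Proof.
  intros Hx Hy; unfold Rdiv.
  rewrite ln_mult, ln_Rinv; [ring | exact Hy | exact Hx | now apply Rinv_0_lt_compat].
Qed.

Definition dprofile (c k s : R) : R := c * exp s - (c - 1) - k * s.

Lemma dprofile_pos c k s : 0 < c -> k <= c -> 0 <= s -> 0 < dprofile c k s.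
Proof.
  intros Hc Hkc Hs; unfold dprofile.
  assert (Hexp : c * (1 + s) <= c * exp s)
    by (apply Rmult_le_compat_l; [lra | apply exp_ineq1_le]).
  assert (Hslope : 0 <= (c - k) * s) by (apply Rmult_le_pos; lra).
  lra.
Qed.

(* The tangent line at s0 = ln k - ln c gives c e^s = k e^(s - s0) >= k (1 + s - s0). *)
Lemma dprofile_ge_min c k s : 0 < c -> 0 < k ->
  k - (c - 1) - k * (ln k - ln c) <= dprofile c k s.
Proof.
  intros Hc Hk; unfold dprofile.
  assert (Hshift : c * exp s = k * exp (s - (ln k - ln c))).
  { unfold Rminus; rewrite !exp_plus, exp_Ropp, exp_plus, exp_Ropp, !exp_ln by lra.
    field; lra. }
  assert (Htangent : k * (1 + (s - (ln k - ln c))) <= k * exp (s - (ln k - ln c)))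
    by (apply Rmult_le_compat_l; [lra | apply exp_ineq1_le]).
  lra.
Qed.

Lemma dprofile_at_min c k : 0 < c -> 0 < k ->
  dprofile c k (ln k - ln c) = k - (c - 1) - k * (ln k - ln c).
Proof.
  intros Hc Hk; unfold dprofile.
  replace (exp (ln k - ln c)) with (exp (ln k + - ln c)) by (f_equal; ring).
  rewrite exp_plus, exp_Ropp, !exp_ln by lra.
  field; lra.
Qed.

Lemma exists_dprofile_nonpos_iff c k : 0 < c ->
  (exists s, 0 < s /\ dprofile c k s <= 0) <->
  (c < k /\ ln (c / k) <= (c - 1 - k) / k).
Proof.
  intros Hc; split.
  - intros [s [Hs Hf]].
    assert (Hck : c < k).
    { destruct (Rlt_or_le c k) as [H | H]; [exact H |].
      pose proof (dprofile_pos c k s Hc H (Rlt_le _ _ Hs)); lra. }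
    split; [exact Hck |].
    rewrite ln_div by lra.
    apply (Rmult_le_reg_l k); [lra |].
    replace (k * ((c - 1 - k) / k)) with (c - 1 - k) by (field; lra).
    pose proof (dprofile_ge_min c k s Hc ltac:(lra)); lra.
  - intros [Hck Hln].
    rewrite ln_div in Hln by lra.
    assert (Hmin : k * (ln c - ln k) <= c - 1 - k).
    { apply (Rmult_le_compat_l k) in Hln; [| lra].
      replace (k * ((c - 1 - k) / k)) with (c - 1 - k) in Hln by (field; lra).
      exact Hln. }
    exists (ln k - ln c); split.
    + pose proof (ln_increasing c k Hc Hck); lra.
    + rewrite dprofile_at_min by lra; lra.
Qed.

Lemma Dfun_dprofile rho0 du0 t x :
  Dfun rho0 du0 t x =
  exp (- t / 2) * dprofile (8 * rho0 x) (8 * rho0 x - 2 * du0 x - 1) (t / 2).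
Proof.
  unfold Dfun, Acoef, Bcoef, dprofile.
  assert (Hinv : exp (- t / 2) * exp (t / 2) = 1).
  { rewrite <- exp_plus, <- exp_0; f_equal; field. }
  transitivity (8 * rho0 x * (exp (- t / 2) * exp (t / 2))
    - exp (- t / 2) * ((8 * rho0 x - 1) + (8 * rho0 x - 2 * du0 x - 1) * (t / 2))).
  - rewrite Hinv; field.
  - ring.
Qed.

Lemma Dfun_nonpos_iff rho0 du0 t x :
  Dfun rho0 du0 t x <= 0 <->
  dprofile (8 * rho0 x) (8 * rho0 x - 2 * du0 x - 1) (t / 2) <= 0.
Proof.
  rewrite Dfun_dprofile; pose proof (exp_pos (- t / 2)) as He; split; intros H.
  - apply (Rmult_le_reg_l (exp (- t / 2))); [exact He | lra].
  - rewrite <- (Rmult_0_r (exp (- t / 2))).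
    apply Rmult_le_compat_l; lra.
Qed.

Lemma blowup_condition_iff r a : 0 < r ->
  (8 * r < 8 * r - 2 * a - 1 /\
     ln (8 * r / (8 * r - 2 * a - 1))
       <= (8 * r - 1 - (8 * r - 2 * a - 1)) / (8 * r - 2 * a - 1)) <->
  (a < Rmin 0 (4 * r - 1/2) /\
     ln (8 * r / (8 * r - 2 * a - 1)) <= 2 * a / (8 * r - 2 * a - 1)).
Proof.
  intros Hr.
  replace (8 * r - 1 - (8 * r - 2 * a - 1)) with (2 * a) by ring.
  split; intros [Hlt Hln]; split; try exact Hln.
  - apply Rmin_glb_lt; lra.
  - pose proof (Rmin_l 0 (4 * r - 1/2)); pose proof (Rmin_r 0 (4 * r - 1/2)).
    set (k := 8 * r - 2 * a - 1) in *.
    assert (Hratio_neg : ln (8 * r / k) < 0).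
    { apply (Rle_lt_trans _ _ _ Hln).
      apply Rdiv_neg_pos; unfold k in *; lra. }
    rewrite ln_div in Hratio_neg by (unfold k in *; lra).
    apply ln_lt_inv; unfold k in *; lra.
Qed.

Theorem proposition3p2
  (a0 b0 : R) (rho0 u0 du0 : R -> R)
  (Hab : a0 < b0)
  (Hrho_cont : forall x, a0 <= x <= b0 -> continuity_pt rho0 x)
  (Hu_cont : forall x, a0 <= x <= b0 -> continuity_pt u0 x)
  (Hdu : forall x, a0 < x < b0 -> derivable_pt_lim u0 x (du0 x))
  (Hdu_cont : forall x, a0 < x < b0 -> continuity_pt du0 x)
  (Hrho_pos : forall x, a0 < x < b0 -> 0 < rho0 x)
  (pr : Riemann_integrable rho0 a0 b0)
  (HM0pos : 0 < RiemannInt pr)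
  (HM0 : 1 - 4 * RiemannInt pr = 0) :
  (exists t x, 0 < t /\ a0 < x < b0 /\ Dfun rho0 du0 t x <= 0) <->
  (exists x, a0 < x < b0 /\
     du0 x < Rmin 0 (4 * rho0 x - 1/2) /\
     ln (8 * rho0 x / (8 * rho0 x - 2 * du0 x - 1))
       <= 2 * du0 x / (8 * rho0 x - 2 * du0 x - 1)).
Proof.
  split.
  - intros [t [x [Ht [Hx HD]]]].
    pose proof (Hrho_pos x Hx) as Hr.
    exists x; split; [exact Hx |].
    apply blowup_condition_iff, exists_dprofile_nonpos_iff; try lra.
    exists (t / 2); split; [lra | now apply Dfun_nonpos_iff].
  - intros [x [Hx Hcond]].
    pose proof (Hrho_pos x Hx) as Hr.
    apply blowup_condition_iff, exists_dprofile_nonpos_iff in Hcond; try lra.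
    destruct Hcond as [s [Hs Hf]].
    exists (2 * s), x; split; [lra | split; [exact Hx |]].
    apply Dfun_nonpos_iff; replace (2 * s / 2) with s by field; exact Hf.
Qed.
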